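(* Let $\tau$ be a Euclidean triangle with edge lengths $\ell_1,\ell_2,\ell_3$ and interior angles $\alpha_1,\alpha_2,\alpha_3$ (the angle $\alpha_i$ opposite the edge of length $\ell_i$). The following are equivalent: (i) $\tau$ is generic, i.e. for some real $k>0$ the numbers $k\ell_1,k\ell_2,k\ell_3$ are algebraically independent over $\mathbb{Q}$; (s) for some (hence almost every) $k\in\mathbb{R}$ the numbers $k\sin\alpha_1,k\sin\alpha_2,k\sin\alpha_3$ are algebraically independent over $\mathbb{Q}$; (c) for some (hence almost every) $k\in\mathbb{R}$ the numbers $k\cos\alpha_1,k\cos\alpha_2,k\cos\alpha_3$ are algebraically independent over $\mathbb{Q}$.
   Context: Real numbers $a_1,a_2,a_3$ are algebraically independent over $\mathbb{Q}$ if there is no nonzero polynomial $p\in\mathbb{Z}[x_1,x_2,x_3]$ with $p(a_1,a_2,a_3)=0$. *)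

From mathcomp Require Import all_boot all_algebra.
From mathcomp Require Import Rstruct.
From mathcomp Require Import mpoly.
From Stdlib Require Import Reals.
Import GRing.Theory.
Local Open Scope ring_scope.


Definition evalZ3 (p : {mpoly int[3]}) (a1 a2 a3 : R) : R :=
  (map_mpoly (fun z : int => (z%:~R : R)%R) p).@[fun i : 'I_3 => nth 0 [:: a1; a2; a3] i].

(* a1,a2,a3 are algebraically independent over Q: no nonzero p in Z[x1,x2,x3]
   vanishes at (a1,a2,a3). *)
Definition alg_indep3 (a1 a2 a3 : R) : Prop :=
  forall p : {mpoly int[3]}, p != 0 -> evalZ3 p a1 a2 a3 <> 0.

Local Open Scope R_scope.

Definition point := (R * R)%type.

Definition seglen (P Q : point) : R :=
  sqrt ((fst Q - fst P) ^ 2 + (snd Q - snd P) ^ 2).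

Definition noncollinear (A B C : point) : Prop :=
  (fst B - fst A) * (snd C - snd A) - (snd B - snd A) * (fst C - fst A) <> 0.

Definition angle_at (A B C : point) : R :=
  acos (((fst B - fst A) * (fst C - fst A) + (snd B - snd A) * (snd C - snd A))
        / (seglen A B * seglen A C)).

(* S is a Lebesgue-null subset of R: for every eps > 0 it is covered by
   countably many open intervals of total length at most eps. *)
Definition null_set (S : R -> Prop) : Prop :=
  forall eps : R, 0 < eps ->
    exists a b : nat -> R,
      (forall n, a n <= b n) /\
      (forall x, S x -> exists n, a n < x < b n) /\
      (forall N, sum_f_R0 (fun n => b n - a n) N <= eps).

(* By the law of sines [sin alpha_i] is proportional to [l_i], and by the law of
   cosines [2 l1 l2 l3 cos alpha_i] is the value at [l] of the cubic form
   [F_i = x_i (x_j^2 + x_k^2 - x_i^2)].  So (s) is (i) up to a real factor, and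
   since [F] is homogeneous and every real has a real cube root,
   [k F(l) = F(k^(1/3) l)]: (c) follows once [F] preserves algebraic independence
   in both directions.  Forwards, the leading monomials [x1^3, x1^2 x2, x1^2 x3]
   of [F] have independent exponents, so [p o F <> 0] whenever [p <> 0].
   Backwards, a counting argument shows that every [p] is algebraic over [Z[F]],
   which yields [Q <> 0] with [Q o F] a multiple of [p]; a relation [p(l) = 0]
   then gives [Q(F(l)) = 0].  Finally, if [k0 s] is independent, then for every
   [p <> 0] the map [k |-> p(k s)] is a nonzero polynomial, so the bad [k] form a
   countable, hence null, set. *)

From Stdlib Require Import Reals Lra Classical ClassicalEpsilon.
From mathcomp Require Import all_boot all_order all_algebra.
From mathcomp Require Import Rstruct mpoly zify.

Set Implicit Arguments.
Unset Strict Implicit.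
Unset Printing Implicit Defensive.

Import Order.TTheory GRing.Theory.
Local Open Scope ring_scope.

(** * Substitution into integer polynomials *)

Lemma seq_argmax (T : eqType) (d : Order.disp_t) (U : orderType d)
    (h : T -> U) (s : seq T) x :
  x \in s -> exists2 M, M \in s & forall m, m \in s -> (h m <= h M)%O.
Proof.
elim: s x => [//|a s IH] x _.
case: s IH => [|b s] IH.
  by exists a => [|m]; rewrite ?mem_head // inE => /eqP ->.
have [M Ms maxM] := IH b (mem_head _ _).
have [haM|hMa] := leP (h a) (h M).
- exists M => [|m]; first by rewrite inE Ms orbT.
  by rewrite inE => /orP[/eqP ->|/maxM].
- exists a => [|m]; first exact: mem_head.
  by rewrite inE => /orP[/eqP ->//|/maxM/le_trans]; apply; apply: ltW.
Qed.

Section SubstitutionLeadingMonomial.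
Variables (R : idomainType) (k n : nat) (f : k.-tuple {mpoly R[n]}).

Definition mlead_subst (m : 'X_{1..k}) : 'X_{1..n} :=
  (\sum_(i < k) mlead (tnth f i) *+ m i)%MM.

Hypothesis f_neq0 : forall i, tnth f i != 0.

Lemma comp_mpolyX_neq0 m : 'X_[m] \mPo f != 0.
Proof. by rewrite comp_mpolyX; apply/prodf_neq0 => i _; rewrite expf_neq0. Qed.

Lemma mlead_comp_mpolyX m : mlead ('X_[m] \mPo f) = mlead_subst m.
Proof.
rewrite comp_mpolyX mlead_prod => [|i _ _]; last by rewrite expf_neq0.
by apply: eq_bigr => i _; rewrite mleadX.
Qed.

Hypothesis mlead_subst_inj : injective mlead_subst.

(* The coefficient of [p \mPo f] at [mlead_subst M], for [M] the monomial of [p]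
   with the largest image, receives a contribution from [M] only. *)
Lemma comp_mpoly_neq0 p : p != 0 -> p \mPo f != 0.
Proof.
move=> p_neq0; have [M Mp maxM] := seq_argmax mlead_subst (mlead_supp p_neq0).
apply/eqP => /(congr1 (mcoeff (mlead_subst M))).
rewrite mcoeff0 comp_mpolyE raddf_sum /= (bigD1_seq M Mp (msupp_uniq p)) /=.
rewrite [X in _ + X]big1_seq => [|m /andP[mM mp]]; last first.
  rewrite mcoeffZ -comp_mpolyX [X in _ * X]mcoeff_gt_mlead ?mulr0 // mlead_comp_mpolyX.
  by rewrite lt_neqAle maxM // andbT (inj_eq mlead_subst_inj).
rewrite addr0 mcoeffZ -comp_mpolyX -(mlead_comp_mpolyX M) => /eqP.
by rewrite mulf_eq0 mleadc_eq0 (negbTE (comp_mpolyX_neq0 M)) orbF mcoeff_eq0 Mp.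
Qed.

End SubstitutionLeadingMonomial.

Lemma card_bmultinom_le n B : (#|{: 'X_{1..n < B}}| <= B ^ n)%N.
Proof.
have mnm_le_mdeg (m : 'X_{1..n}) i : (m i <= mdeg m)%N.
  by rewrite mdegE (bigD1 i) //= leq_addr.
pose exps (m : 'X_{1..n < B}) : {ffun 'I_n -> 'I_B} :=
  [ffun i => Ordinal (leq_ltn_trans (mnm_le_mdeg m i) (bmdeg m))].
have exps_inj : injective exps.
  move=> m m' /ffunP E; apply/val_inj/mnmP => i.
  by have /(congr1 val) := E i; rewrite !ffunE.
by have := leq_card _ exps_inj; rewrite card_ffun !card_ord.
Qed.

Lemma rat_vector_scale_int (I : finType) (v : I -> rat) :
  exists c : I -> int, exists2 d : rat, d != 0 & forall i, (c i)%:~R = v i * d.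
Proof.
exists (fun i => numq (v i) * \prod_(j | j != i) denq (v j)).
exists (\prod_j denq (v j))%:~R => [|i].
  by rewrite intr_eq0; apply/prodf_neq0 => j _; rewrite denq_neq0.
by rewrite [in RHS](bigD1 i) //= !intrM mulrA numqE.
Qed.

Lemma mpoly_int_dependent n (I : finType) B (G : I -> {mpoly int[n]}) :
  (B ^ n < #|I|)%N -> (forall x m, m \in msupp (G x) -> (mdeg m < B)%N) ->
  exists2 c : I -> int, (exists x, c x != 0) & \sum_x c x *: G x = 0.
Proof.
move=> card_gt G_deg; pose K := #|{: 'X_{1..n < B}}|.
pose A : 'M[rat]_(#|I|, K) :=
  \matrix_(r, s) ((G (enum_val r))@_(bmnm (enum_val s)))%:~R.
have kerA_neq0 : kermx A != 0.
  rewrite kermx_eq0; apply/negP => /eqP rankA.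
  have := rank_leq_col A; rewrite rankA leqNgt.
  by rewrite (leq_ltn_trans (card_bmultinom_le n B) card_gt).
have /existsP[i vi] : [exists i, row i (kermx A) != 0].
  apply: contraR kerA_neq0 => /existsPn kerA0; apply/eqP/row_matrixP => i.
  by rewrite row0; apply/eqP/negPn/kerA0.
pose v := row i (kermx A).
have vA : v *m A = 0 by rewrite -row_mul mulmx_ker row0.
have [c [d d_neq0 cE]] := rat_vector_scale_int (v 0).
exists (fun x => c (enum_rank x)).
  have /existsP[r vr] : [exists r, v 0 r != 0].
    apply: contraR vi => /existsPn v0; apply/eqP/rowP => r.
    by rewrite [RHS]mxE; apply/eqP/negPn/v0.
  by exists (enum_val r); rewrite enum_valK -(intr_eq0 rat) cE mulf_neq0.
rewrite (reindex (@enum_val I predT)) /=; last by apply: onW_bij; exact: enum_val_bij.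
apply/mpolyP => m; rewrite mcoeff0 raddf_sum /=.
have [m_small|m_large] := ltnP (mdeg m) B; last first.
  rewrite big1 // => r _; rewrite mcoeffZ memN_msupp_eq0 ?mulr0 //.
  by apply/negP => /G_deg; rewrite ltnNge m_large.
apply: (@intr_inj rat); rewrite rmorph0 rmorph_sum /=.
pose s : 'I_K := enum_rank (BMultinom m_small).
have /rowP/(_ s) := vA; rewrite !mxE => vAs.
rewrite (eq_bigr (fun r => d * (v 0 r * A r s))) => [|r _]; last first.
  by rewrite enum_valK mcoeffZ rmorphM /= cE /A !mxE enum_rankK mulrCA mulrA.
by rewrite -mulr_sumr vAs mulr0.
Qed.

Section DegreeBound.
Variables (R : comNzRingType) (n : nat).

Definition deg_le (p : {mpoly R[n]}) (d : nat) :=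
  forall m, m \in msupp p -> (mdeg m <= d)%N.

Lemma msize_deg_le p d : (msize p <= d)%N -> deg_le p d.
Proof. by move=> le_pd m /msize_mdeg_lt/leq_trans/(_ le_pd)/ltnW. Qed.

Lemma deg_le1 : deg_le 1 0.
Proof. by move=> m; rewrite msupp1 inE => /eqP ->; rewrite mdeg0. Qed.

Lemma deg_leM p q dp dq : deg_le p dp -> deg_le q dq -> deg_le (p * q) (dp + dq).
Proof.
move=> hp hq m /msuppM_le /allpairsP [[mp mq] /= [/hp mp_le /hq mq_le ->]].
by rewrite mdegD leq_add.
Qed.

Lemma deg_le_prod (I : finType) (F : I -> {mpoly R[n]}) (dF : I -> nat) :
  (forall i, deg_le (F i) (dF i)) -> deg_le (\prod_i F i) (\sum_i dF i).
Proof.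
move=> hF; apply: (big_ind2 (fun p d => deg_le p d)) => //; first exact: deg_le1.
by move=> p1 d1 p2 d2; apply: deg_leM.
Qed.

Lemma deg_leX p d e : deg_le p d -> deg_le (p ^+ e) (d * e).
Proof.
move=> hp; elim: e => [|e IH]; first by rewrite expr0 muln0; apply: deg_le1.
by rewrite exprS mulnS; apply: deg_leM.
Qed.

End DegreeBound.

Lemma lowest_coef_multiple (A : idomainType) D (S : 'I_D -> A) (p : A) (j0 : 'I_D) :
  p != 0 -> (forall j : 'I_D, (j < j0)%N -> S j = 0) ->
  \sum_j S j * p ^+ j = 0 -> exists T, S j0 = p * T.
Proof.
move=> p_neq0 S_low sum0.
pose T := \sum_(j | j != j0) S j * p ^+ (j - j0.+1).
have shift : \sum_j S j * p ^+ j = p ^+ j0 * (S j0 + p * T).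
  rewrite (bigD1 j0) //= mulrDr mulrC; congr (_ + _).
  rewrite /T !mulr_sumr; apply: eq_bigr => j ne_j.
  have [lt_j|gt_j] := ltnP j j0; first by rewrite S_low // !(mul0r, mulr0).
  by rewrite mulrA -exprSr mulrCA -exprD subnKC // ltn_neqAle gt_j andbT eq_sym.
exists (- T); apply/eqP; rewrite mulrN -subr_eq0 opprK.
by move: sum0; rewrite shift => /eqP; rewrite mulf_eq0 expf_eq0 (negbTE p_neq0) andbF.
Qed.

Section AlgebraicOverComposition.
Variables (n : nat) (f : n.-tuple {mpoly int[n]}).

Definition mnm_of_exps D (y : {ffun 'I_n -> 'I_D}) : 'X_{1..n} :=
  [multinom (y i : nat) | i < n].

Lemma mnm_of_exps_inj D : injective (@mnm_of_exps D).
Proof.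
move=> y y' /mnmP E; apply/ffunP => i; apply/val_inj.
by have := E i; rewrite !mnmE.
Qed.

Lemma mcoeff_sum_mnm_of_exps D (c : {ffun 'I_n -> 'I_D} -> int) y :
  (\sum_y' c y' *: 'X_[mnm_of_exps y'])@_(mnm_of_exps y) = c y.
Proof.
rewrite raddf_sum /= (bigD1 y) //= mcoeffZ mcoeffX eqxx mulr1 big1 ?addr0 //.
move=> y' ne_y'; rewrite mcoeffZ mcoeffX (inj_eq (@mnm_of_exps_inj D)).
by rewrite (negbTE ne_y') mulr0.
Qed.

Definition comp_size_bound (p : {mpoly int[n]}) := (msize p + \sum_i msize (tnth f i)).+1.

Lemma mdeg_comp_mpolyX_mul_lt p D (y : {ffun 'I_n -> 'I_D}) (j : 'I_D) m :
  m \in msupp (('X_[mnm_of_exps y] \mPo f) * p ^+ j) ->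
  (mdeg m < n.+1 * comp_size_bound p * D)%N.
Proof.
set d := comp_size_bound p.
have p_le : deg_le p d by apply: msize_deg_le; rewrite leqW // leq_addr.
have f_le i : deg_le (tnth f i) d.
  by apply: msize_deg_le; rewrite leqW // (bigD1 i) //= addnCA leq_addr.
rewrite comp_mpolyX; under eq_bigr do rewrite mnmE.
move=> /(deg_leM (deg_le_prod (fun i => deg_leX (e := y i) (f_le i)))
                 (deg_leX (e := j) p_le)).
have sum_le : (\sum_i y i <= n * D)%N.
  have : (\sum_i y i <= \sum_(i < n) D)%N by apply: leq_sum => i _; apply: ltnW.
  by rewrite sum_nat_const card_ord.
have := ltn_ord j; rewrite -big_distrr /=.
move: (\sum_i _)%N sum_le (mdeg m) (nat_of_ord j) => S le_S M j' lt_j' le_M.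
have : (d * S <= d * (n * D))%N by rewrite leq_mul2l le_S orbT.
have : (d * j' < d * D)%N by rewrite ltn_mul2l lt_j'.
have : (0 < d)%N by [].
clearbody d; nia.
Qed.

(* The [D ^ n.+1] products [f^y * p^j] with [y_i, j < D] have degree below
   [B := n.+1 * d * D], and there are only [B ^ n] monomials of such degree. *)
Lemma mpoly_algebraic_over_comp p :
  exists D (Q : 'I_D -> {mpoly int[n]}),
    (exists j, Q j != 0) /\ \sum_j (Q j \mPo f) * p ^+ j = 0.
Proof.
pose D := ((n.+1 * comp_size_bound p) ^ n).+1.
pose G (x : {ffun 'I_n -> 'I_D} * 'I_D) := ('X_[mnm_of_exps x.1] \mPo f) * p ^+ x.2.
have [|x m|c [x0 cx0] sum0] :=
  @mpoly_int_dependent n _ (n.+1 * comp_size_bound p * D) G.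
- by rewrite card_prod card_ffun !card_ord expnMn mulnC ltn_pmul2l ?expn_gt0.
- exact: mdeg_comp_mpolyX_mul_lt.
exists D, (fun j => \sum_y c (y, j) *: 'X_[mnm_of_exps y]); split.
  by exists x0.2; apply: contraNneq cx0 => /(congr1 (mcoeff (mnm_of_exps x0.1)));
    rewrite mcoeff_sum_mnm_of_exps mcoeff0 -surjective_pairing => ->.
apply: etrans sum0; under eq_bigr do rewrite raddf_sum mulr_suml.
rewrite exchange_big pair_bigA; apply: eq_bigr => -[y j] _ /=.
by rewrite comp_mpolyZ -scalerAl.
Qed.

Lemma exists_comp_mpoly_multiple p : p != 0 ->
  exists2 Q : {mpoly int[n]}, Q != 0 & exists S, Q \mPo f = p * S.
Proof.
move=> p_neq0; have [D [Q [[j Qj] sum0]]] := mpoly_algebraic_over_comp p.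
case: (@arg_minnP _ j (fun j => Q j != 0) (@nat_of_ord D) Qj) => j0 Qj0 min_j0.
exists (Q j0) => //; apply: (lowest_coef_multiple (S := fun j => Q j \mPo f) p_neq0 _ sum0).
move=> i lt_i; suff -> : Q i = 0 by rewrite comp_mpoly0.
by apply/eqP; apply: contraTT lt_i => Qi; rewrite -leqNgt; apply: min_j0.
Qed.

End AlgebraicOverComposition.

Lemma poly_roots_in_seq (F : idomainType) (P : {poly F}) :
  P != 0 -> exists s : seq F, forall x, root P x -> x \in s.
Proof.
elim: {P}(size P) {-2}P (leqnn (size P)) => [|n IH] P size_P P_neq0.
  by move: P_neq0; rewrite -size_poly_eq0 -leqn0 size_P.
have [[x0 /factor_theorem [Q PQ]]|no_root] := classic (exists x, root P x); last first.
  by exists [::] => x Px; case: no_root; exists x.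
have Q_neq0 : Q != 0 by apply: contraNneq P_neq0 => Q0; rewrite PQ Q0 mul0r.
have size_Q : (size Q <= n)%N.
  by move: size_P; rewrite PQ size_mul ?polyXsubC_eq0 // size_XsubC addn2.
have [s Qs] := IH Q size_Q Q_neq0.
exists (x0 :: s) => x; rewrite /root PQ hornerM mulf_eq0 => /orP[/Qs x_s|].
  by rewrite inE x_s orbT.
by rewrite !hornerE subr_eq0 inE => ->.
Qed.

(* [{mpoly int[n]}] is not a [countType]; it is enumerated through lists of terms. *)
Definition mpoly_of_terms n (t : seq ('X_{1..n} * int)) : {mpoly int[n]} :=
  \sum_(mc <- t) mc.2 *: 'X_[mc.1].

Lemma mpoly_of_terms_surj n (p : {mpoly int[n]}) : exists t, mpoly_of_terms t = p.
Proof.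
by exists [seq (m, p@_m) | m <- msupp p]; rewrite /mpoly_of_terms big_map [RHS]mpolyE.
Qed.
(** * Algebraic independence of three reals *)

Section EvalZ3.
Variables a1 a2 a3 : R.

Lemma evalZ3D p q : evalZ3 (p + q) a1 a2 a3 = evalZ3 p a1 a2 a3 + evalZ3 q a1 a2 a3.
Proof. by rewrite /evalZ3 rmorphD mevalD. Qed.

Lemma evalZ3N p : evalZ3 (- p) a1 a2 a3 = - evalZ3 p a1 a2 a3.
Proof. by rewrite /evalZ3 rmorphN mevalN. Qed.

Lemma evalZ3M p q : evalZ3 (p * q) a1 a2 a3 = evalZ3 p a1 a2 a3 * evalZ3 q a1 a2 a3.
Proof. by rewrite /evalZ3 rmorphM mevalM. Qed.

Lemma evalZ3Z c p : evalZ3 (c *: p) a1 a2 a3 = c%:~R * evalZ3 p a1 a2 a3.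
Proof. by rewrite /evalZ3 map_mpolyZ mevalZ. Qed.

Lemma evalZ3_sum (I : Type) (r : seq I) (P : pred I) (F : I -> {mpoly int[3]}) :
  evalZ3 (\sum_(i <- r | P i) F i) a1 a2 a3 = \sum_(i <- r | P i) evalZ3 (F i) a1 a2 a3.
Proof. by apply: (big_morph _ evalZ3D); rewrite /evalZ3 raddf0 meval0. Qed.

Lemma evalZ3X m : evalZ3 'X_[m] a1 a2 a3 = a1 ^+ m 0 * a2 ^+ m 1 * a3 ^+ m 2.
Proof.
rewrite /evalZ3 map_mpolyX mevalX !big_ord_recl big_ord0 mulr1 mulrA.
by congr (_ ^+ _ * _ ^+ _ * _ ^+ _); congr (fun_of_multinom m _); apply/val_inj.
Qed.

Lemma evalZ3XU (i : 'I_3) : evalZ3 'X_i a1 a2 a3 = nth 0 [:: a1; a2; a3] i.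
Proof. by rewrite /evalZ3 map_mpolyX mevalXU. Qed.

Lemma evalZ3_comp p (f : 3.-tuple {mpoly int[3]}) :
  evalZ3 (p \mPo f) a1 a2 a3 = evalZ3 p (evalZ3 (tnth f 0) a1 a2 a3)
    (evalZ3 (tnth f 1) a1 a2 a3) (evalZ3 (tnth f 2) a1 a2 a3).
Proof.
rewrite /evalZ3 map_mpoly_comp; last exact: intr_inj.
rewrite comp_mpoly_meval; apply: meval_eq => i; rewrite tnth_map.
by case: i => [[|[|[|//]]] lt_i3] /=; congr (map_mpoly _ (tnth _ _)).@[_]; apply/val_inj.
Qed.

End EvalZ3.

Lemma alg_indep3_comp (f : 3.-tuple {mpoly int[3]}) x1 x2 x3 :
  (forall p, p != 0 -> p \mPo f != 0) -> alg_indep3 x1 x2 x3 ->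
  alg_indep3 (evalZ3 (tnth f 0) x1 x2 x3) (evalZ3 (tnth f 1) x1 x2 x3)
             (evalZ3 (tnth f 2) x1 x2 x3).
Proof. by move=> f_inj x_indep p /f_inj; rewrite -evalZ3_comp; apply: x_indep. Qed.

Lemma alg_indep3_of_comp (f : 3.-tuple {mpoly int[3]}) x1 x2 x3 :
  alg_indep3 (evalZ3 (tnth f 0) x1 x2 x3) (evalZ3 (tnth f 1) x1 x2 x3)
             (evalZ3 (tnth f 2) x1 x2 x3) ->
  alg_indep3 x1 x2 x3.
Proof.
move=> fx_indep p p_neq0 px0.
have [Q Q_neq0 [S QS]] := exists_comp_mpoly_multiple f p_neq0.
by apply: (fx_indep Q Q_neq0); rewrite -evalZ3_comp QS evalZ3M px0 mul0r.
Qed.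

Lemma alg_indep3_neq0 x1 x2 x3 : alg_indep3 x1 x2 x3 -> x1 <> 0.
Proof.
move=> x_indep x1_0; apply: (x_indep 'X_0); last by rewrite evalZ3XU.
by rewrite -msupp_eq0 msuppX.
Qed.

Lemma mlead_subst_oppX (R : idomainType) n (m : 'X_{1..n}) :
  mlead_subst [tuple - 'X_i : {mpoly R[n]} | i < n] m = m.
Proof.
rewrite [RHS]multinomUE_id; apply: eq_bigr => i _.
by rewrite tnth_mktuple mleadN mleadXm.
Qed.

Lemma alg_indep3N x1 x2 x3 : alg_indep3 x1 x2 x3 -> alg_indep3 (- x1) (- x2) (- x3).
Proof.
pose f := [tuple - 'X_i : {mpoly int[3]} | i < 3].
have fx i : evalZ3 (tnth f i) x1 x2 x3 = - nth 0 [:: x1; x2; x3] i.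
  by rewrite tnth_mktuple evalZ3N evalZ3XU.
move=> /(alg_indep3_comp (f := f)); rewrite !fx; apply => p.
apply: comp_mpoly_neq0 => [i|m m'].
  by rewrite tnth_mktuple oppr_eq0 -msupp_eq0 msuppX.
by rewrite !mlead_subst_oppX.
Qed.

Lemma ord3P (P : 'I_3 -> Prop) : P 0 -> P 1 -> P 2 -> forall i, P i.
Proof.
by move=> P0 P1 P2 [[|[|[|//]]] lt_i3]; [move: P0|move: P1|move: P2];
  congr (P _); apply/val_inj.
Qed.

Lemma big_ord3 (T : Type) (idx : T) (op : Monoid.law idx) (F : 'I_3 -> T) :
  \big[op/idx]_(i < 3) F i = op (F 0) (op (F 1) (F 2)).
Proof.
rewrite !big_ord_recl big_ord0 Monoid.mulm1.
by congr (op (F _) (op (F _) (F _))); apply/val_inj.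
Qed.

Definition mnm3 (a b c : nat) : 'X_{1..3} := [multinom of [:: a; b; c]].

Lemma mnm3E a b c (i : 'I_3) : mnm3 a b c i = nth 0%N [:: a; b; c] i.
Proof. by rewrite /mnm3 multinomE (tnth_nth 0%N). Qed.

Lemma mdeg_mnm3 a b c : mdeg (mnm3 a b c) = (a + b + c)%N.
Proof. by rewrite mdegE !big_ord_recr big_ord0 /= !mnm3E. Qed.

(* At the edge lengths of a triangle, [cosine_poly_i] takes the value
   [2 l1 l2 l3 cos alpha_i]. *)
Definition cosine_poly1 : {mpoly int[3]} :=
  - 'X_[mnm3 3 0 0] + 'X_[mnm3 1 2 0] + 'X_[mnm3 1 0 2].
Definition cosine_poly2 : {mpoly int[3]} :=
  'X_[mnm3 2 1 0] + 'X_[mnm3 0 1 2] - 'X_[mnm3 0 3 0].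
Definition cosine_poly3 : {mpoly int[3]} :=
  'X_[mnm3 2 0 1] + 'X_[mnm3 0 2 1] - 'X_[mnm3 0 0 3].

Definition cosine_map : 3.-tuple {mpoly int[3]} :=
  [tuple cosine_poly1; cosine_poly2; cosine_poly3].

Lemma mleadD3l (R : nzRingType) n (p q r : {mpoly R[n]}) :
  (mlead q < mlead p)%O -> (mlead r < mlead p)%O -> mlead (p + q + r) = mlead p.
Proof. by move=> lt_qp lt_rp; rewrite !mleadDl // mleadDl. Qed.

Lemma mlead_cosine_map :
  [/\ mlead (tnth cosine_map 0) = mnm3 3 0 0, mlead (tnth cosine_map 1) = mnm3 2 1 0 &
      mlead (tnth cosine_map 2) = mnm3 2 0 1].
Proof.
split; rewrite mleadD3l ?mleadN ?mleadXm //.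
all: by rewrite ltEmnm !mdeg_mnm3.
Qed.

Lemma mlead_subst_cosine_map m :
  mlead_subst cosine_map m = mnm3 (3 * m 0 + 2 * m 1 + 2 * m 2) (m 1) (m 2).
Proof.
have [L0 L1 L2] := mlead_cosine_map.
apply/mnmP; apply: ord3P;
  by rewrite mnm_sumE big_ord3 !mulmnE L0 L1 L2 !mnm3E /=; lia.
Qed.

Lemma cosine_map_comp_neq0 p : p != 0 -> p \mPo cosine_map != 0.
Proof.
have [L0 L1 L2] := mlead_cosine_map.
apply: comp_mpoly_neq0 => [|m m']; last first.
  rewrite !mlead_subst_cosine_map => /mnmP E; apply/mnmP; apply: ord3P;
  by move: (E 0) (E 1) (E 2); rewrite !mnm3E /=; lia.
apply: ord3P; apply/eqP => /(congr1 (@mlead _ _)) /(congr1 mdeg);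
  by rewrite mlead0 mdeg0 ?L0 ?L1 ?L2 mdeg_mnm3.
Qed.

(** * Independent multiples *)

Lemma evalZ3X_scale k a1 a2 a3 m :
  evalZ3 'X_[m] (k * a1) (k * a2) (k * a3) = k ^+ mdeg m * evalZ3 'X_[m] a1 a2 a3.
Proof.
rewrite /evalZ3 !map_mpolyX !mevalX mdegE -prodrXr -big_split /=.
by apply: eq_bigr => -[[|[|[|//]]] ?] _; rewrite -exprMn.
Qed.

Section ScaledEvaluation.
Variables s1 s2 s3 : R.

Lemma evalZ3_homog_scale e q k : q \is e.-homog ->
  evalZ3 q (k * s1) (k * s2) (k * s3) = k ^+ e * evalZ3 q s1 s2 s3.
Proof.
move=> /dhomogP q_homog; rewrite [q]mpolyE !evalZ3_sum mulr_sumr !big_seq.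
by apply: eq_bigr => m m_supp; rewrite !evalZ3Z evalZ3X_scale q_homog // mulrCA.
Qed.

Definition scaled_poly (p : {mpoly int[3]}) : {poly R} :=
  \poly_(e < msize p) evalZ3 (pihomog mdeg e p) s1 s2 s3.

Lemma horner_scaled_poly p k :
  (scaled_poly p).[k] = evalZ3 p (k * s1) (k * s2) (k * s3).
Proof.
rewrite horner_poly [in RHS](pihomog_partitionE (leqnn (msize p))) evalZ3_sum.
by apply: eq_bigr => e _; rewrite (evalZ3_homog_scale _ (pihomogP _ _ _)) mulrC.
Qed.

Lemma scaled_poly_neq0 k0 p : alg_indep3 (k0 * s1) (k0 * s2) (k0 * s3) -> p != 0 ->
  scaled_poly p != 0.
Proof.
move=> k0_indep; apply: contraNneq => P0.
rewrite (pihomog_partitionE (leqnn (msize p))) big1 // => e _.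
have := congr1 (fun P : {poly R} => P`_e) P0; rewrite coef_poly ltn_ord coef0 => coef_e0.
apply/eqP/negPn/negP => pe_neq0; apply: (k0_indep _ pe_neq0).
by rewrite (evalZ3_homog_scale _ (pihomogP _ _ _)) coef_e0 mulr0.
Qed.

End ScaledEvaluation.

Lemma not_indep_multiples_countable s1 s2 s3 k0 :
  alg_indep3 (k0 * s1) (k0 * s2) (k0 * s3) ->
  exists e : nat -> R,
    forall k, ~ alg_indep3 (k * s1) (k * s2) (k * s3) -> exists i, e i = k.
Proof.
move=> k0_indep.
have roots (p : {mpoly int[3]}) : exists r : seq R,
    forall k, p != 0 -> evalZ3 p (k * s1) (k * s2) (k * s3) = 0 -> k \in r.
  have [->|p_neq0] := eqVneq p 0; first by exists [::] => k /eqP.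
  have [r r_roots] := poly_roots_in_seq (scaled_poly_neq0 k0_indep p_neq0).
  by exists r => k _ pk; apply: r_roots; apply/eqP; rewrite horner_scaled_poly; exact: pk.
pose L p := proj1_sig (constructive_indefinite_description _ (roots p)).
pose e i := if unpickle i : option (seq ('X_{1..3} * int) * nat) is Some (t, j)
            then nth 0 (L (mpoly_of_terms t)) j else 0.
exists e => k k_dep.
have [p [p_neq0 pk]] : exists p, p != 0 /\ evalZ3 p (k * s1) (k * s2) (k * s3) = 0.
  by apply: NNPP => none; apply: k_dep => p p_neq0 pk; apply: none; exists p.
have [t tp] := mpoly_of_terms_surj p.
exists (pickle (t, index k (L (mpoly_of_terms t)))).
rewrite /e pickleK nth_index //= tp.
exact: (proj2_sig (constructive_indefinite_description _ (roots p))).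
Qed.

Local Open Scope R_scope.

Definition indep_multiple (x1 x2 x3 : R) : Prop :=
  exists k, alg_indep3 (k * x1) (k * x2) (k * x3).

Lemma indep_multiple_scale r x1 x2 x3 : r <> 0 ->
  indep_multiple (r * x1) (r * x2) (r * x3) <-> indep_multiple x1 x2 x3.
Proof.
move=> r_neq0; split=> [[k]|[k]].
  by exists (k * r); rewrite !Rmult_assoc.
have e x : k / r * (r * x) = k * x by field.
by exists (k / r); rewrite !e.
Qed.

Lemma indep_multiple_pos x1 x2 x3 :
  indep_multiple x1 x2 x3 <-> exists k, 0 < k /\ alg_indep3 (k * x1) (k * x2) (k * x3).
Proof.
split=> [[k k_indep]|[k [_ k_indep]]]; last by exists k.
have [k_neg|[k0|k_pos]] := Rtotal_order k 0.
- by exists (- k); split; [lra | rewrite -!Ropp_mult_distr_l; apply: alg_indep3N].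
- by have := alg_indep3_neq0 k_indep; rewrite k0 Rmult_0_l.
- by exists k.
Qed.

Lemma exists_cube_root (a : R) : exists mu, mu ^ 3 = a.
Proof.
have cube_pos b : 0 < b -> exists mu, mu ^ 3 = b.
  move=> b_pos; exists (exp (ln b / 3)).
  by rewrite /= Rmult_1_r -!exp_plus -[RHS]exp_ln //; congr exp; field.
have [a_neg|[a0|a_pos]] := Rtotal_order a 0.
- have [mu mu3] := cube_pos (- a) ltac:(lra).
  by exists (- mu); rewrite -[a]Ropp_involutive -mu3; ring.
- by exists 0; rewrite a0; ring.
- exact: cube_pos.
Qed.

Lemma cosine_polyE x1 x2 x3 :
  [/\ evalZ3 cosine_poly1 x1 x2 x3 = x1 * (x2 ^ 2 + x3 ^ 2 - x1 ^ 2),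
      evalZ3 cosine_poly2 x1 x2 x3 = x2 * (x1 ^ 2 + x3 ^ 2 - x2 ^ 2) &
      evalZ3 cosine_poly3 x1 x2 x3 = x3 * (x1 ^ 2 + x2 ^ 2 - x3 ^ 2)].
Proof.
rewrite !(evalZ3D, evalZ3N, evalZ3X) !mnm3E /=.
by rewrite -!RpowE -!RmultE -!RoppE -!RplusE; split; ring.
Qed.

Lemma indep_multiple_cosine_polys x1 x2 x3 :
  indep_multiple (evalZ3 cosine_poly1 x1 x2 x3) (evalZ3 cosine_poly2 x1 x2 x3)
                 (evalZ3 cosine_poly3 x1 x2 x3) <->
  indep_multiple x1 x2 x3.
Proof.
have [F1 F2 F3] := cosine_polyE x1 x2 x3.
have cube_scaling mu p : p \in [:: cosine_poly1; cosine_poly2; cosine_poly3] ->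
    evalZ3 p (mu * x1) (mu * x2) (mu * x3) = mu ^ 3 * evalZ3 p x1 x2 x3.
  have [G1 G2 G3] := cosine_polyE (mu * x1) (mu * x2) (mu * x3).
  by rewrite !inE => /or3P[] /eqP ->; rewrite ?F1 ?G1 ?F2 ?G2 ?F3 ?G3; ring.
split=> [[k Fk_indep]|[mu x_indep]].
  have [mu mu3] := exists_cube_root k; exists mu.
  apply: (alg_indep3_of_comp (f := cosine_map)).
  by rewrite /= !cube_scaling ?mu3 ?inE ?eqxx ?orbT.
exists (mu ^ 3); rewrite -!cube_scaling ?inE ?eqxx ?orbT //.
exact: (alg_indep3_comp cosine_map_comp_neq0 x_indep).
Qed.

Lemma sum_eps_halves (eps : R) N :
  sum_f_R0 (fun i => eps / 2 ^ S i) N = eps - eps / 2 ^ S N.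
Proof.
elim: N => [|N IH] /=; first by field.
by rewrite IH /=; field; apply: pow_nonzero; lra.
Qed.

Lemma null_set_of_countable (A : R -> Prop) (e : nat -> R) :
  (forall k, A k -> exists i, e i = k) -> null_set A.
Proof.
move=> A_e eps eps_pos.
have r_pos i : 0 < eps / 2 ^ i by apply: Rdiv_lt_0_compat => //; apply: pow_lt; lra.
exists (fun i => e i - eps / 2 ^ S (S i)), (fun i => e i + eps / 2 ^ S (S i)).
split; [|split].
- by move=> i; have := r_pos (S (S i)); lra.
- by move=> x /A_e [i <-]; exists i; have := r_pos (S (S i)); lra.
- move=> N; rewrite (PartSum.sum_eq _ (fun i => eps / 2 ^ S i)) => [|i _].
    by rewrite sum_eps_halves; have := r_pos (S N); lra.
  by rewrite /=; field; apply: pow_nonzero; lra.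
Qed.

Lemma indep_multiple_null s1 s2 s3 : indep_multiple s1 s2 s3 ->
  null_set (fun k => ~ alg_indep3 (k * s1) (k * s2) (k * s3)).
Proof.
move=> [k0 /not_indep_multiples_countable [e e_cover]].
exact: null_set_of_countable e_cover.
Qed.

(** * Triangle geometry *)

Lemma acos_pythagorean (a b c : R) : 0 < c -> a ^ 2 + b ^ 2 = c ^ 2 ->
  cos (acos (a / c)) = a / c /\ sin (acos (a / c)) = Rabs b / c.
Proof.
move=> c_pos abc.
have ratio : 1 - (a / c)² = (b / c)².
  have -> : (b / c)² = b ^ 2 / c ^ 2 by rewrite /Rsqr; field; lra.
  have -> : b ^ 2 = c ^ 2 - a ^ 2 by lra.
  by rewrite /Rsqr; field; lra.
have bounds : -1 <= a / c <= 1.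
  have : (a / c)² <= 1 by have := Rle_0_sqr (b / c); lra.
  by rewrite /Rsqr; nra.
split; first exact: cos_acos.
rewrite sin_acos // ratio sqrt_Rsqr_abs Rabs_mult Rabs_inv (Rabs_pos_eq c) //; lra.
Qed.

Definition signed_area2 (A B C : point) : R :=
  (fst B - fst A) * (snd C - snd A) - (snd B - snd A) * (fst C - fst A).

Lemma signed_area2_swap A B C : signed_area2 B A C = - signed_area2 A B C.
Proof. rewrite /signed_area2; ring. Qed.

Lemma signed_area2_rot A B C : signed_area2 C A B = signed_area2 A B C.
Proof. rewrite /signed_area2; ring. Qed.

Lemma seglen_sym P Q : seglen P Q = seglen Q P.
Proof. by rewrite /seglen; f_equal; ring. Qed.

Lemma seglen_sq P Q : seglen P Q ^ 2 = (fst Q - fst P) ^ 2 + (snd Q - snd P) ^ 2.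
Proof. by rewrite /seglen pow2_sqrt //; apply: Rplus_le_le_0_compat; apply: pow2_ge_0. Qed.

Lemma seglen_gt0 P Q : P <> Q -> 0 < seglen P Q.
Proof.
move=> PQ; apply: sqrt_lt_R0.
have [dx|dx] := Req_dec (fst Q - fst P) 0; last by have := pow2_ge_0 (snd Q - snd P); nra.
have [dy|dy] := Req_dec (snd Q - snd P) 0; last by rewrite dx; nra.
by case: PQ; case: P Q dx dy => [? ?] [? ?] /= *; f_equal; lra.
Qed.

Lemma noncollinear_neq A B C : noncollinear A B C -> A <> B /\ A <> C.
Proof. by move=> ABC; split=> E; apply: ABC; rewrite E; ring. Qed.

Lemma angle_at_cos_sin P Q S : noncollinear P Q S ->
  let dot := (fst Q - fst P) * (fst S - fst P) + (snd Q - snd P) * (snd S - snd P) in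
  cos (angle_at P Q S) = dot / (seglen P Q * seglen P S) /\
  sin (angle_at P Q S) = Rabs (signed_area2 P Q S) / (seglen P Q * seglen P S).
Proof.
move=> PQS dot; have [/seglen_gt0 PQ_pos /seglen_gt0 PS_pos] := noncollinear_neq PQS.
apply: acos_pythagorean; first exact: Rmult_lt_0_compat.
by rewrite /dot /signed_area2 Rpow_mult_distr !seglen_sq; ring.
Qed.

Lemma law_of_cosines P Q S : noncollinear P Q S ->
  2 * seglen P Q * seglen P S * cos (angle_at P Q S) =
  seglen P Q ^ 2 + seglen P S ^ 2 - seglen Q S ^ 2.
Proof.
move=> PQS; have [/seglen_gt0 PQ_pos /seglen_gt0 PS_pos] := noncollinear_neq PQS.
have [-> _] := angle_at_cos_sin PQS.
by rewrite !seglen_sq; field; lra.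
Qed.

Lemma law_of_sines P Q S : noncollinear P Q S ->
  seglen P Q * seglen P S * sin (angle_at P Q S) = Rabs (signed_area2 P Q S).
Proof.
move=> PQS; have [/seglen_gt0 PQ_pos /seglen_gt0 PS_pos] := noncollinear_neq PQS.
by have [_ ->] := angle_at_cos_sin PQS; field; lra.
Qed.

Section Triangle.
Variables A1 A2 A3 : point.
Hypothesis A123 : noncollinear A1 A2 A3.

Let l1 := seglen A2 A3.
Let l2 := seglen A1 A3.
Let l3 := seglen A1 A2.

Lemma triangle_noncollinear : noncollinear A2 A1 A3 /\ noncollinear A3 A1 A2.
Proof.
rewrite /noncollinear -/(signed_area2 A2 A1 A3) -/(signed_area2 A3 A1 A2).
rewrite (signed_area2_swap A1) (signed_area2_rot A1).
by split=> //; apply: Ropp_neq_0_compat.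
Qed.

Lemma triangle_sides_pos : 0 < l1 /\ 0 < l2 /\ 0 < l3.
Proof.
have [A213 _] := triangle_noncollinear.
have [/seglen_gt0 ? /seglen_gt0 ?] := noncollinear_neq A123.
by have [_ /seglen_gt0 ?] := noncollinear_neq A213.
Qed.

Lemma triangle_sines : exists2 r, r <> 0 &
  [/\ sin (angle_at A1 A2 A3) = r * l1, sin (angle_at A2 A1 A3) = r * l2 &
      sin (angle_at A3 A1 A2) = r * l3].
Proof.
have [A213 A312] := triangle_noncollinear.
have [l1_pos [l2_pos l3_pos]] := triangle_sides_pos.
have area_pos : 0 < Rabs (signed_area2 A1 A2 A3) by apply: Rabs_pos_lt.
have S1 := law_of_sines A123; have S2 := law_of_sines A213; have S3 := law_of_sines A312.
rewrite (signed_area2_swap A1) Rabs_Ropp (seglen_sym A2 A1) in S2.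
rewrite (signed_area2_rot A1) (seglen_sym A3 A1) (seglen_sym A3 A2) in S3.
exists (Rabs (signed_area2 A1 A2 A3) / (l1 * l2 * l3)).
  by apply: Rgt_not_eq; apply: Rdiv_lt_0_compat => //; apply: Rmult_lt_0_compat; nra.
rewrite -/l1 -/l2 -/l3 in S1 S2 S3.
have solve x y z : 0 < x -> 0 < y -> x * y * z = Rabs (signed_area2 A1 A2 A3) ->
    z = Rabs (signed_area2 A1 A2 A3) / (x * y).
  by move=> x_pos y_pos <-; field; lra.
rewrite (solve _ _ _ _ _ S1) ?(solve _ _ _ _ _ S2) ?(solve _ _ _ _ _ S3) //.
by split; field; lra.
Qed.

Lemma triangle_cosines : exists2 r, r <> 0 &
  [/\ cos (angle_at A1 A2 A3) = r * evalZ3 cosine_poly1 l1 l2 l3,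
      cos (angle_at A2 A1 A3) = r * evalZ3 cosine_poly2 l1 l2 l3 &
      cos (angle_at A3 A1 A2) = r * evalZ3 cosine_poly3 l1 l2 l3].
Proof.
have [A213 A312] := triangle_noncollinear.
have [l1_pos [l2_pos l3_pos]] := triangle_sides_pos.
have C1 := law_of_cosines A123; have C2 := law_of_cosines A213.
have C3 := law_of_cosines A312.
rewrite (seglen_sym A2 A1) in C2.
rewrite (seglen_sym A3 A1) (seglen_sym A3 A2) in C3.
rewrite -/l1 -/l2 -/l3 in C1 C2 C3.
have [-> -> ->] := cosine_polyE l1 l2 l3.
have solve x y z w : 0 < x -> 0 < y -> 2 * x * y * z = w -> z = w / (2 * x * y).
  by move=> x_pos y_pos <-; field; lra.
rewrite (solve _ _ _ _ _ _ C1) ?(solve _ _ _ _ _ _ C2) ?(solve _ _ _ _ _ _ C3) //.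
exists (/ (2 * l1 * l2 * l3)).
  by apply/Rinv_neq_0_compat/Rgt_not_eq; repeat apply: Rmult_lt_0_compat; lra.
by split; field; lra.
Qed.

End Triangle.

Theorem proposition2p2 (A1 A2 A3 : point) :
  noncollinear A1 A2 A3 ->
  let l1 := seglen A2 A3 in
  let l2 := seglen A1 A3 in
  let l3 := seglen A1 A2 in
  let alpha1 := angle_at A1 A2 A3 in
  let alpha2 := angle_at A2 A1 A3 in
  let alpha3 := angle_at A3 A1 A2 in
  let gen_i := exists k : R, 0 < k /\ alg_indep3 (k * l1) (k * l2) (k * l3) in
  let gen_s := exists k : R,
      alg_indep3 (k * sin alpha1) (k * sin alpha2) (k * sin alpha3) in
  let gen_c := exists k : R,
      alg_indep3 (k * cos alpha1) (k * cos alpha2) (k * cos alpha3) in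
  (gen_i <-> gen_s) /\ (gen_i <-> gen_c) /\
  (gen_s -> null_set (fun k : R =>
      ~ alg_indep3 (k * sin alpha1) (k * sin alpha2) (k * sin alpha3))) /\
  (gen_c -> null_set (fun k : R =>
      ~ alg_indep3 (k * cos alpha1) (k * cos alpha2) (k * cos alpha3))).
Proof.
move=> A123 l1 l2 l3 alpha1 alpha2 alpha3 gen_i gen_s gen_c.
have gen_iE : gen_i <-> indep_multiple l1 l2 l3.
  exact: iff_sym (indep_multiple_pos l1 l2 l3).
have [r r_neq0 [sin1 sin2 sin3]] := triangle_sines A123.
have [r' r'_neq0 [cos1 cos2 cos3]] := triangle_cosines A123.
have gen_sE : gen_s <-> indep_multiple l1 l2 l3.
  by rewrite /gen_s /alpha1 /alpha2 /alpha3 sin1 sin2 sin3; apply: indep_multiple_scale.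
have gen_cE : gen_c <-> indep_multiple l1 l2 l3.
  rewrite /gen_c /alpha1 /alpha2 /alpha3 cos1 cos2 cos3.
  by rewrite -(indep_multiple_cosine_polys l1 l2 l3); apply: indep_multiple_scale.
split; [|split; [|split]].
- by rewrite gen_iE gen_sE.
- by rewrite gen_iE gen_cE.
- exact: indep_multiple_null.
- exact: indep_multiple_null.
Qed.
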